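(* For every graph $G$ and every $c\in[\frac12,1)$, $\mathrm{bn}(G)\le \frac{1}{1-c}\,\mathrm{sep}^*_c(G)$.
   Context: Two subgraphs $A,B$ of $G$ touch if they share a vertex or some edge of $G$ has one endpoint in $A$ and the other in $B$. A bramble is a set of connected subgraphs of $G$ that pairwise touch; a hitting set of a bramble is a set of vertices meeting every element; the order of a bramble is the minimum size of a hitting set; the bramble number $\mathrm{bn}(G)$ is the maximum order of a bramble in $G$. For $S\subseteq V(G)$ and $c\in[\frac12,1)$, a $(k,S,c)^*$-separator is a set $X\subseteq V(G)$ with $|X|\le k$ such that no component of $G-X$ contains more than $c|S|$ vertices of $S\setminus X$. $\mathrm{sep}^*_c(G)$ is the minimum integer $k$ such that $G$ has a $(k,S,c)^*$-separator for every $S\subseteq V(G)$. *)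

From HB Require Import structures.
From mathcomp Require Import all_boot all_order all_algebra.
From mathcomp Require Import reals.
Set Implicit Arguments. Unset Strict Implicit. Unset Printing Implicit Defensive.
Import Order.TTheory GRing.Theory Num.Theory.

(* A finite simple graph: vertex type T : finType, adjacency e : rel T
   (symmetry and irreflexivity are hypotheses of the theorem). *)

Section Graphs.
Variables (T : finType) (e : rel T).

Definition induced_rel (A : {set T}) : rel T :=
  [rel x y | [&& x \in A, y \in A & e x y]].

(* A vertex set A spans a connected subgraph: nonempty, and G[A] connected.
   (A subgraph is connected iff it is nonempty and its vertex set induces a
   connected subgraph; touching and hitting depend only on vertex sets.) *)
Definition connected_set (A : {set T}) : bool :=
  (A != set0) && [forall x in A, forall y in A, connect (induced_rel A) x y].

Definition touch (A B : {set T}) : bool :=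
  [exists x, (x \in A) && (x \in B)] ||
  [exists x, exists y, [&& x \in A, y \in B & e x y]].

Definition bramble (BB : {set {set T}}) : bool :=
  [forall A in BB, connected_set A] &&
  [forall A in BB, forall B in BB, touch A B].

Definition hitting (BB : {set {set T}}) (X : {set T}) : bool :=
  [forall A in BB, [exists x, (x \in A) && (x \in X)]].

(* order: minimum size of a hitting set (setT hits every bramble, since
   bramble elements are nonempty, so #|T| is an upper bound) *)
Definition bramble_order (BB : {set {set T}}) : nat :=
  \big[minn/#|T|]_(X : {set T} | hitting BB X) #|X|.

Definition bramble_number : nat :=
  \max_(BB : {set {set T}} | bramble BB) bramble_order BB.

Definition comp_rel (X : {set T}) (v w : T) : bool :=
  connect (induced_rel (~: X)) v w.

Variable R : realType.

Definition star_separator (k : nat) (S : {set T}) (c : R) (X : {set T}) : bool :=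
  (#|X| <= k)%N &&
  [forall v in ~: X,
     (#|[set w in S :\: X | comp_rel X v w]|%:R <= c * #|S|%:R)%R].

Definition sep_ok (c : R) (k : nat) : bool :=
  [forall S : {set T}, exists X : {set T}, star_separator k S c X].

Lemma sep_ok_ex (c : R) : (0 <= c)%R -> exists k, sep_ok c k.
Proof.
move=> c0; exists #|T|; apply/forallP => S; apply/existsP; exists setT.
rewrite /star_separator max_card /=; apply/forallP => v.
by rewrite setCT in_set0.
Qed.

End Graphs.

(* sep*_c(G): the minimum k such that G has a (k,S,c)*-separator for every S.
   For c < 0 (outside the intended range) we default to 0. *)
Definition sep_star (T : finType) (e : rel T) (R : realType) (c : R) : nat :=
  match boolP (0 <= c)%R with
  | AltTrue h => ex_minn (sep_ok_ex e h)
  | AltFalse _ => 0%N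
  end.

(* Let S be a minimum hitting set of a bramble and X a (k,S,c)*-separator.
   If X hits the bramble, |S| <= |X| <= k.  Otherwise some element B of the
   bramble avoids X, hence lies in a single component C of G - X, and every
   element avoiding X touches B, so lies in C too and meets S inside C.
   Then X together with S in C is a hitting set, and minimality of S gives
   |S| <= k + c|S|.  In both cases (1 - c) |S| <= k. *)

From HB Require Import structures.
From mathcomp Require Import all_boot all_order all_algebra.
From mathcomp Require Import reals.
Import Order.TTheory GRing.Theory Num.Theory.

Lemma bigmin_leq (I : eqType) (r : seq I) (P : pred I) (F : I -> nat) i0 x0 :
  i0 \in r -> P i0 -> (\big[minn/x0]_(i <- r | P i) F i <= F i0)%N.
Proof.
elim: r => // a r IHr; rewrite in_cons big_cons => /orP[/eqP<- -> | ir Pi0].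
  exact: geq_minl.
by case: (P a); rewrite ?geq_min IHr ?orbT.
Qed.

Section Brambles.
Variables (T : finType) (e : rel T).

Lemma meetsE (A X : {set T}) :
  [exists x, (x \in A) && (x \in X)] = ~~ [disjoint A & X].
Proof.
rewrite disjoints_subset; apply/existsP/subsetPn => [[x /andP[xA xX]]|[x xA]].
  by exists x; rewrite // inE negbK.
by rewrite inE negbK => xX; exists x; rewrite xA.
Qed.

Lemma hittingP (BB : {set {set T}}) (X : {set T}) :
  reflect (forall A, A \in BB -> ~~ [disjoint A & X]) (hitting BB X).
Proof.
apply: (iffP forallP) => [hX A AB | hX A].
  by rewrite -meetsE (implyP (hX A)).
by apply/implyP => /hX; rewrite meetsE.
Qed.

Lemma connect_induced_sub {A B : {set T}} {x y : T} :
  A \subset B -> connect (induced_rel e A) x y -> connect (induced_rel e B) x y.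
Proof.
move=> sAB; apply: connect_sub => u v /and3P[uA vA euv]; apply: connect1.
by rewrite /induced_rel /= (subsetP sAB _ uA) (subsetP sAB _ vA).
Qed.

Lemma connected_setP (A : {set T}) x y :
  connected_set e A -> x \in A -> y \in A -> connect (induced_rel e A) x y.
Proof.
by case/andP=> _ /forallP/(_ x)/implyP + xA => /(_ xA)/forallP/(_ y)/implyP.
Qed.

Lemma bramble_elem_neq0 {BB : {set {set T}}} {A : {set T}} :
  bramble e BB -> A \in BB -> A != set0.
Proof. by case/andP=> /forallP/(_ A)/implyP + _ AB => /(_ AB)/andP[]. Qed.

Lemma bramble_connected {BB : {set {set T}}} {A : {set T}} :
  bramble e BB -> A \in BB -> connected_set e A.
Proof. by case/andP=> /forallP/(_ A)/implyP. Qed.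

Lemma bramble_touch {BB : {set {set T}}} {A B : {set T}} :
  bramble e BB -> A \in BB -> B \in BB -> touch e A B.
Proof.
case/andP=> _ /forallP/(_ A)/implyP + AB BB'.
by move=> /(_ AB)/forallP/(_ B)/implyP->.
Qed.

Lemma hitting_setT (BB : {set {set T}}) : bramble e BB -> hitting BB setT.
Proof.
move=> brB; apply/hittingP => A AB; rewrite disjoints_subset setCT subset0.
exact: bramble_elem_neq0 brB AB.
Qed.

Lemma bramble_order_le (BB : {set {set T}}) X :
  hitting BB X -> (bramble_order BB <= #|X|)%N.
Proof. by move=> hX; apply: bigmin_leq; rewrite ?mem_index_enum. Qed.

Lemma exists_min_hitting {BB : {set {set T}}} : bramble e BB ->
  exists2 S, hitting BB S & forall Y, hitting BB Y -> (#|S| <= #|Y|)%N.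
Proof.
move=> /hitting_setT hT.
by case: (arg_minnP (fun X : {set T} => #|X|) hT) => S hS minS; exists S.
Qed.

Lemma touch_comp_rel {X A B : {set T}} {a b : T} :
  connected_set e A -> connected_set e B -> touch e A B ->
  A \subset ~: X -> B \subset ~: X -> a \in A -> b \in B -> comp_rel e X a b.
Proof.
move=> cA cB tAB sAX sBX aA bB.
have inA x : x \in A -> comp_rel e X a x.
  move=> xA; rewrite /comp_rel /=; apply: (connect_induced_sub sAX).
  exact: connected_setP cA aA xA.
have inB y : y \in B -> comp_rel e X y b.
  move=> yB; rewrite /comp_rel /=; apply: (connect_induced_sub sBX).
  exact: connected_setP cB yB bB.
case/orP: tAB => [/existsP[x /andP[xA xB]] |
                  /existsP[x /existsP[y /and3P[xA yB exy]]]].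
  exact: connect_trans (inA x xA) (inB x xB).
apply: connect_trans (inA x xA) (connect_trans _ (inB y yB)); apply: connect1.
by rewrite /induced_rel /= exy (subsetP sAX _ xA) (subsetP sBX _ yB).
Qed.

Lemma hitting_sep_component {BB : {set {set T}}} {S X B : {set T}} {v : T} :
  bramble e BB -> hitting BB S -> B \in BB -> [disjoint B & X] -> v \in B ->
  hitting BB (X :|: [set w in S :\: X | comp_rel e X v w]).
Proof.
move=> brB /hittingP hS BB' dBX vB; apply/hittingP => A AB.
have [dAX | ] := boolP [disjoint A & X]; last first.
  by apply: contra => /disjointWr; apply; apply: subsetUl.
have sAX : A \subset ~: X by rewrite -disjoints_subset.
have sBX : B \subset ~: X by rewrite -disjoints_subset.
have /existsP[s /andP[sA sS]] : [exists x, (x \in A) && (x \in S)].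
  by rewrite meetsE hS.
rewrite -meetsE; apply/existsP; exists s.
rewrite sA !inE sS (disjointFr dAX sA) /=.
exact: touch_comp_rel (bramble_connected brB BB') (bramble_connected brB AB)
  (bramble_touch brB BB' AB) sBX sAX vB sA.
Qed.

Variable R : realType.

Lemma min_hitting_le_separator
    {BB : {set {set T}}} {S X : {set T}} {k : nat} {c : R} :
  bramble e BB -> hitting BB S ->
  (forall Y, hitting BB Y -> (#|S| <= #|Y|)%N) ->
  (0 <= c)%R -> star_separator e k S c X ->
  (#|S|%:R <= k%:R + c * #|S|%:R :> R)%R.
Proof.
move=> brB hS minS c0 /andP[cardX /forallP sepX].
have [hX | ] := boolP (hitting BB X).
  apply: (@le_trans _ _ (k%:R)%R); last by rewrite lerDl mulr_ge0.
  by rewrite ler_nat (leq_trans (minS _ hX)).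
rewrite negb_forall => /existsP[B].
rewrite negb_imply meetsE negbK => /andP[BB' dBX].
have /set0Pn[v vB] := bramble_elem_neq0 brB BB'.
have vX : v \in ~: X by rewrite inE (disjointFr dBX vB).
set C := [set w in S :\: X | comp_rel e X v w] in sepX *.
have cardC : (#|C|%:R <= c * #|S|%:R :> R)%R := implyP (sepX v) vX.
have cardS : (#|S| <= k + #|C|)%N.
  apply: leq_trans (minS _ (hitting_sep_component brB hS BB' dBX vB)) _.
  by rewrite (leq_trans (leq_card_setU _ _)) // leq_add2r.
apply: (@le_trans _ _ (k%:R + #|C|%:R)%R); first by rewrite -natrD ler_nat.
by rewrite lerD2l.
Qed.

Lemma bramble_order_le_sep {BB : {set {set T}}} {k : nat} {c : R} :
  bramble e BB -> sep_ok e c k -> (0 <= c)%R -> (c < 1)%R ->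
  ((bramble_order BB)%:R <= (1 - c)^-1 * k%:R :> R)%R.
Proof.
move=> brB /forallP sepk c0 c1; have [S hS minS] := exists_min_hitting brB.
have /existsP[X sepX] := sepk S.
have leSk := min_hitting_le_separator brB hS minS c0 sepX.
apply: (@le_trans _ _ (#|S|%:R)%R); first by rewrite ler_nat bramble_order_le.
by rewrite ler_pdivlMl ?subr_gt0 // mulrBl mul1r lerBlDr.
Qed.

Lemma sep_ok_sep_star (c : R) : (0 <= c)%R -> sep_ok e c (sep_star e c).
Proof.
rewrite /sep_star => c0; case: {-}_ / boolP => [h | ]; last by rewrite c0.
by case: ex_minnP.
Qed.

End Brambles.

Theorem lemma8 (R : realType) (T : finType) (e : rel T)
  (e_sym : symmetric e) (e_irr : irreflexive e) (c : R)
  (hc1 : (1 / 2 <= c)%R) (hc2 : (c < 1)%R) :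
  ((bramble_number e)%:R <= (1 - c)^-1 * (sep_star e c)%:R :> R)%R.
Proof.
have c0 : (0 <= c)%R by apply: le_trans hc1; rewrite divr_ge0.
have sep_k := @sep_ok_sep_star T e R c c0.
apply: (big_ind (fun n : nat => n%:R <= (1 - c)^-1 * (sep_star e c)%:R)%R).
- by rewrite mulr_ge0 // invr_ge0 subr_ge0 ltW.
- by move=> m n hm hn; rewrite /maxn; case: ltnP.
- by move=> BB brB; exact: bramble_order_le_sep brB sep_k c0 hc2.
Qed.
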